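(* Let $n,p,\ell$ be positive integers, $A\in\mathbb{R}^{n\times n}$, $C\in\mathbb{R}^{p\times n}$, $X_0,W\in\mathbb{R}^{n\times n}$ symmetric positive definite, and $V=\operatorname{diag}(\sigma_{v,1}^2,\dots,\sigma_{v,p}^2)$ with all $\sigma_{v,i}>0$. Let $\mathcal{I}=\{1,\dots,p\}$ and, for $\mathcal{S}\subseteq\mathcal{I}$, let $L$, $U_{\mathcal{S}}$, $J(\mathcal{S})$ and $f(\mathcal{S})=J(\emptyset)-J(\mathcal{S})$ be as defined in the context. Define $$\underline{\gamma}:=\frac{\lambda_{\min}(L)}{\lambda_{\max}(L+U_{\mathcal{I}})},\qquad \overline{\alpha}:=1-\frac{\{\lambda_{\min}(L)\}^2}{\{\lambda_{\max}(L+U_{\mathcal{I}})\}^2}.$$ Then $f:2^{\mathcal{I}}\to\mathbb{R}$ is nondecreasing (i.e. $f(\mathcal{S}_1)\le f(\mathcal{S}_2)$ whenever $\mathcal{S}_1\subseteq\mathcal{S}_2\subseteq\mathcal{I}$), and its submodularity ratio $\gamma$ and curvature $\alpha$ satisfy $$\gamma\ge\underline{\gamma}>0,\qquad \alpha\le\overline{\alpha}<1.$$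
   Context: Let $\Phi\in\mathbb{R}^{n\ell\times n\ell}$ be the block lower-triangular matrix whose $(i,j)$ block ($i,j=1,\dots,\ell$) is $A^{i-j}$ for $i\ge j$ (with $A^0=I_n$) and $0$ for $i<j$. Let $Z=\operatorname{diag}(X_0,W,\dots,W)$ (block diagonal with $\ell$ blocks) and $L:=Z^{-1}$. For $\mathcal{S}=\{\theta_1<\theta_2<\dots<\theta_s\}\subseteq\mathcal{I}$, the selection matrix $S_{\mathcal{S}}\in\mathbb{R}^{s\times p}$ has $[S_{\mathcal{S}}]_{i,j}=1$ if $j=\theta_i$ and $0$ otherwise; set $G=\{I_\ell\otimes(S_{\mathcal{S}}C)\}\Phi$, $V_{\mathcal{S}}=I_\ell\otimes(S_{\mathcal{S}}VS_{\mathcal{S}}^\top)$ and $U_{\mathcal{S}}:=G^\top V_{\mathcal{S}}^{-1}G$, with the convention $U_\emptyset=0$. (Equivalently $U_{\mathcal{S}}=\sum_{i\in\mathcal{S}}\sigma_{v,i}^{-2}\Phi^\top(I_\ell\otimes C)^\top(I_\ell\otimes I^{(i)})(I_\ell\otimes C)\Phi$, where $I^{(i)}$ is the $p\times p$ matrix with a single $1$ in position $(i,i)$.) Define $J(\mathcal{S}):=\operatorname{tr}[(L+U_{\mathcal{S}})^{-1}]$ (this is the smoothing mean square error over times $0,\dots,\ell-1$ for the system $x_{k+1}=Ax_k+w_k$, $y_k=Cx_k+v_k$ using only outputs indexed by $\mathcal{S}$, with $\mathrm{Cov}[x_0]=X_0$, $\mathrm{Cov}[w_k]=W$, $\mathrm{Cov}[v_k]=V$),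 and $f(\mathcal{S}):=-J(\mathcal{S})+J(\emptyset)$. $\lambda_{\min},\lambda_{\max}$ denote minimum and maximum eigenvalues. For $\Omega,\mathcal{S}\subseteq\mathcal{I}$ let $\rho_\Omega(\mathcal{S}):=f(\mathcal{S}\cup\Omega)-f(\mathcal{S})$. The submodularity ratio of $f$ is the largest scalar $\gamma$ such that $\sum_{\omega\in\Omega\setminus\mathcal{S}}\rho_{\{\omega\}}(\mathcal{S})\ge\gamma\,\rho_\Omega(\mathcal{S})$ for all $\Omega,\mathcal{S}\subseteq\mathcal{I}$. The curvature of $f$ is the smallest scalar $\alpha$ such that $\rho_{\{j\}}(\mathcal{S}\setminus\{j\}\cup\Omega)\ge(1-\alpha)\rho_{\{j\}}(\mathcal{S}\setminus\{j\})$ for all $\Omega,\mathcal{S}\subseteq\mathcal{I}$ and all $j\in\mathcal{S}\setminus\Omega$. *)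

From mathcomp Require Import all_boot all_order all_algebra.
From mathcomp Require Import mxtens.
From mathcomp Require Import reals.
Set Implicit Arguments. Unset Strict Implicit. Unset Printing Implicit Defensive.
Import Order.TTheory GRing.Theory Num.Theory.
Local Open Scope ring_scope.

Section Defs.
Variable R : realType.

Definition spd (k : nat) (M : 'M[R]_k) : Prop :=
  M^T = M /\ forall v : 'rV[R]_k, v != 0 -> 0 < (v *m M *m v^T) 0 0.

Definition shiftmx (l d : nat) : 'M[R]_l :=
  \matrix_(i, j) ((i : nat) == (j : nat) + d)%:R.

(* Phi : block (i,j) = A^(i-j) for i >= j, 0 otherwise.  Kronecker product
   [*t] (mxtens) indexes k : 'I_(l*n) as block k %/ n, inner index k %% n. *)
Definition Phi (n l : nat) (A : 'M[R]_n) : 'M[R]_(l * n) :=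
  \sum_(d < l) (shiftmx l d *t (A ^+ d)).

(* Z = diag(X0, W, ..., W) with l blocks; L = Z^{-1} *)
Definition Zmx (n l : nat) (X0 W : 'M[R]_n) : 'M[R]_(l * n) :=
  (\matrix_(i, j) ((i == j) && ((i : nat) == 0%N))%:R) *t X0
  + (\matrix_(i, j) ((i == j) && ((i : nat) != 0%N))%:R) *t W.

Definition Lmx (n l : nat) (X0 W : 'M[R]_n) : 'M[R]_(l * n) := invmx (Zmx l X0 W).

Definition Umx (n p l : nat) (A : 'M[R]_n) (C : 'M[R]_(p, n))
  (sig : 'I_p -> R) (S : {set 'I_p}) : 'M[R]_(l * n) :=
  \sum_(i in S) ((sig i) ^- 2 *:
     ((Phi l A)^T *m ((1%:M : 'M[R]_l) *t C)^T
        *m ((1%:M : 'M[R]_l) *t delta_mx i i) *m ((1%:M : 'M[R]_l) *t C) *m Phi l A)).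

Definition Jcost (n p l : nat) (A : 'M[R]_n) (C : 'M[R]_(p, n)) (X0 W : 'M[R]_n)
  (sig : 'I_p -> R) (S : {set 'I_p}) : R :=
  \tr (invmx (Lmx l X0 W + Umx l A C sig S)).

Definition fobj (n p l : nat) (A : 'M[R]_n) (C : 'M[R]_(p, n)) (X0 W : 'M[R]_n)
  (sig : 'I_p -> R) (S : {set 'I_p}) : R :=
  - Jcost l A C X0 W sig S + Jcost l A C X0 W sig set0.

Definition is_lambda_min (k : nat) (M : 'M[R]_k) (x : R) : Prop :=
  eigenvalue M x /\ forall y, eigenvalue M y -> x <= y.
Definition is_lambda_max (k : nat) (M : 'M[R]_k) (x : R) : Prop :=
  eigenvalue M x /\ forall y, eigenvalue M y -> y <= x.

Definition rho (p : nat) (f : {set 'I_p} -> R) (Om S : {set 'I_p}) : R :=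
  f (S :|: Om) - f S.

Definition submod_ratio_ineq (p : nat) (f : {set 'I_p} -> R) (g : R) : Prop :=
  forall Om S : {set 'I_p},
    \sum_(w in Om :\: S) rho f [set w] S >= g * rho f Om S.
Definition is_submod_ratio (p : nat) (f : {set 'I_p} -> R) (g : R) : Prop :=
  submod_ratio_ineq f g /\ forall g', submod_ratio_ineq f g' -> g' <= g.

Definition curvature_ineq (p : nat) (f : {set 'I_p} -> R) (a : R) : Prop :=
  forall (Om S : {set 'I_p}) (j : 'I_p), j \in S :\: Om ->
    rho f [set j] ((S :\ j) :|: Om) >= (1 - a) * rho f [set j] (S :\ j).
Definition is_curvature (p : nat) (f : {set 'I_p} -> R) (a : R) : Prop :=
  curvature_ineq f a /\ forall a', curvature_ineq f a' -> a <= a'.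

End Defs.

From mathcomp Require Import all_boot all_order all_algebra.
From mathcomp Require Import mxtens reals.
From mathcomp Require classical_sets.
From mathcomp Require Import ring lra.
Set Implicit Arguments. Unset Strict Implicit. Unset Printing Implicit Defensive.
Import Order.TTheory GRing.Theory Num.Theory.
Local Open Scope ring_scope.

(* Put K_S := (L + U_S)^-1, a := lambda_min(L) and b := lambda_max(L + U_I).  As the
   U_S are Gram matrices growing with S, a |v|^2 <= v (L + U_S) v^T <= b |v|^2 for all S.
   For a psd increment D, the resolvent identity K - K' = K D K - K (D K' D) K gives
     (a/b) tr (K D K) <= tr K - tr K' <= tr (K D K),
   the lower bound because D K' D <= (1 - a/b) D by Cauchy-Schwarz.  Since tr (K U_Om K)
   is additive in Om, the gain of Om is at most b/a times the sum of the gains of its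
   elements: this is the submodularity ratio a/b.  For a single sensor j, U_j = G_j^T G_j
   and the gain of j lies between |G_j|^2/b^2 and |G_j|^2/a^2 whatever the current set,
   which gives the curvature bound 1 - a^2/b^2. *)

Section QuadraticForm.
Variables (R : realType) (k : nat).
Implicit Types (M N X Y : 'M[R]_k) (u v w : 'rV[R]_k).

Definition bform M u w : R := (u *m M *m w^T) 0 0.
Definition qform M v : R := bform M v v.
Definition sqnorm v : R := (v *m v^T) 0 0.
Definition psd M : Prop := forall v, 0 <= qform M v.

Lemma bform_sym M u w : M^T = M -> bform M u w = bform M w u.
Proof.
move=> sM; rewrite /bform -[in LHS](trmxK (u *m M *m w^T)) mxE.
by rewrite !trmx_mul trmxK sM mulmxA.
Qed.

Lemma bformD M N u w : bform (M + N) u w = bform M u w + bform N u w.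
Proof. by rewrite /bform mulmxDr mulmxDl mxE. Qed.

Lemma bformN M u w : bform (- M) u w = - bform M u w.
Proof. by rewrite /bform mulmxN mulNmx mxE. Qed.

Lemma bformB M N u w : bform (M - N) u w = bform M u w - bform N u w.
Proof. by rewrite bformD bformN. Qed.

Lemma bformZ c M u w : bform (c *: M) u w = c * bform M u w.
Proof. by rewrite /bform -scalemxAr -scalemxAl mxE. Qed.

Lemma bformDl M u v w : bform M (u + v) w = bform M u w + bform M v w.
Proof. by rewrite /bform !mulmxDl mxE. Qed.

Lemma bformZl M c u w : bform M (c *: u) w = c * bform M u w.
Proof. by rewrite /bform -!scalemxAl mxE. Qed.

Lemma bformDr M u v w : bform M u (v + w) = bform M u v + bform M u w.
Proof. by rewrite /bform linearD /= mulmxDr mxE. Qed.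

Lemma bformZr M c u w : bform M u (c *: w) = c * bform M u w.
Proof. by rewrite /bform linearZ /= -scalemxAr mxE. Qed.

Lemma bform_mulmx M (P : 'M[R]_k) u w :
  bform M (u *m P) (w *m P) = bform (P *m M *m P^T) u w.
Proof. by rewrite /bform trmx_mul !mulmxA. Qed.

Lemma qform1 v : qform 1%:M v = sqnorm v.
Proof. by rewrite /qform /bform mulmx1. Qed.

Lemma qform0v M : qform M 0 = 0.
Proof. by rewrite /qform /bform !mul0mx mxE. Qed.

Lemma qformE M v : qform M v = \sum_i \sum_j v 0 i * M i j * v 0 j.
Proof.
rewrite /qform /bform mxE exchange_big /=; apply: eq_bigr => j _.
by rewrite !mxE mulr_suml; apply: eq_bigr => i _; rewrite ?mxE.
Qed.

Lemma sqnormE v : sqnorm v = \sum_i v 0 i ^+ 2.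
Proof. by rewrite /sqnorm mxE; apply: eq_bigr => i _; rewrite mxE expr2. Qed.

Lemma sqnorm_ge0 v : 0 <= sqnorm v.
Proof. by rewrite sqnormE sumr_ge0 // => i _; rewrite sqr_ge0. Qed.

Lemma sqnorm_eq0 v : (sqnorm v == 0) = (v == 0).
Proof.
apply/idP/idP; last by move/eqP->; rewrite /sqnorm mul0mx mxE.
rewrite sqnormE psumr_eq0 => [/allP v0|i _]; last by rewrite sqr_ge0.
apply/eqP/rowP => i; rewrite mxE; apply/eqP; rewrite -sqrf_eq0.
exact: (implyP (v0 i (mem_index_enum i))).
Qed.

Lemma sqnorm_gt0 v : v != 0 -> 0 < sqnorm v.
Proof. by rewrite -sqnorm_eq0 lt0r sqnorm_ge0 andbT. Qed.

Lemma sqr_coord_le_sqnorm v i : v 0 i ^+ 2 <= sqnorm v.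
Proof. by rewrite sqnormE (bigD1 i) //= lerDl sumr_ge0 // => j _; rewrite sqr_ge0. Qed.

Lemma psd_bform_CauchySchwarz N u w : N^T = N -> psd N ->
  bform N u w ^+ 2 <= qform N u * qform N w.
Proof.
move=> sN pN; set b := bform N u w; set a := qform N u; set c := qform N w.
have qN_line t : qform N (u + t *: w) = a + 2 * t * b + t ^+ 2 * c.
  rewrite /a /c /qform bformDl !bformDr !bformZl !bformZr (bform_sym w u sN) -/b.
  ring.
have a_ge0 : 0 <= a := pN u.
have [c0|c_neq0] := eqVneq c 0.
  have [b0|b_neq0] := eqVneq b 0; first by rewrite b0 c0 expr0n mulr0.
  have := pN (u + (- (a + 1) / (2 * b)) *: w); rewrite qN_line c0.
  have -> : 2 * (- (a + 1) / (2 * b)) * b = - (a + 1) by field; rewrite b_neq0.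
  lra.
have c_gt0 : 0 < c by rewrite lt0r c_neq0 pN.
have := pN (u + (- b / c) *: w); rewrite qN_line -(pmulr_rge0 _ c_gt0).
have -> : c * (a + 2 * (- b / c) * b + (- b / c) ^+ 2 * c) = a * c - b ^+ 2.
  by field; rewrite c_neq0.
lra.
Qed.

Lemma psd1 : psd 1%:M.
Proof. by move=> v; rewrite qform1 sqnorm_ge0. Qed.

Lemma psd0 : psd 0.
Proof. by move=> v; rewrite /qform /bform mulmx0 mul0mx mxE. Qed.

Lemma psdD X Y : psd X -> psd Y -> psd (X + Y).
Proof. by move=> pX pY v; rewrite /qform bformD addr_ge0 ?pX ?pY. Qed.

Lemma psd_sum (I : finType) (P : pred I) (F : I -> 'M[R]_k) :
  (forall i, P i -> psd (F i)) -> psd (\sum_(i | P i) F i).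
Proof.
move=> pF; elim/big_rec: _ => [|i X Pi pX]; first exact: psd0.
exact: psdD (pF i Pi) pX.
Qed.

Lemma psd_conj M (P : 'M[R]_k) : psd M -> psd (P *m M *m P^T).
Proof. by move=> pM v; rewrite /qform -bform_mulmx; apply: pM. Qed.

End QuadraticForm.

Section ConjugateTrace.
Variables (R : realType) (k : nat).
Implicit Types (X Y : 'M[R]_k).

Lemma psd_gram m (G : 'M[R]_(m, k)) : psd (G^T *m G).
Proof.
move=> v; have -> : qform (G^T *m G) v = sqnorm (v *m G^T).
  by rewrite /qform /bform /sqnorm trmx_mul trmxK !mulmxA.
exact: sqnorm_ge0.
Qed.

Lemma mxtraceB X Y : \tr (X - Y) = \tr X - \tr Y.
Proof. exact: linearB. Qed.

Lemma mxtrace_conj m (P : 'M[R]_(k, m)) X :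
  \tr (P^T *m X *m P) = \sum_i qform X (row i P^T).
Proof.
apply: eq_bigr => i _; rewrite /qform /bform !mxE; apply: eq_bigr => j _.
by rewrite !mxE; congr (_ * _); apply: eq_bigr => l _; rewrite !mxE.
Qed.

Lemma mxtrace_gram m (G : 'M[R]_(m, k)) : \tr (G^T *m G) = \sum_i sqnorm (row i G).
Proof.
rewrite mxtrace_mulC; apply: eq_bigr => i _.
by rewrite /sqnorm !mxE; apply: eq_bigr => j _; rewrite !mxE.
Qed.

Lemma mxtrace_conj_ge0 m (P : 'M[R]_(k, m)) X : psd X -> 0 <= \tr (P^T *m X *m P).
Proof. by move=> pX; rewrite mxtrace_conj sumr_ge0. Qed.

Lemma mxtrace_conj_le m (P : 'M[R]_(k, m)) X Y : psd (Y - X) ->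
  \tr (P^T *m X *m P) <= \tr (P^T *m Y *m P).
Proof.
move/(mxtrace_conj_ge0 P); rewrite mulmxBr mulmxBl linearB /=.
by rewrite subr_ge0.
Qed.

End ConjugateTrace.

Section PositiveDefinite.
Variables (R : realType) (k : nat).
Implicit Types (M N : 'M[R]_k) (v w : 'rV[R]_k).

Lemma unitmx_coercive M a : 0 < a -> (forall v, a * sqnorm v <= qform M v) ->
  M \in unitmx.
Proof.
move=> a_gt0 M_ge; rewrite unitmxE unitfE; apply/negP => /det0P [v v_neq0 vM0].
have := M_ge v; rewrite /qform /bform vM0 mul0mx mxE.
by have := mulr_gt0 a_gt0 (sqnorm_gt0 v_neq0); lra.
Qed.

Lemma invmx_sym M : M^T = M -> (invmx M)^T = invmx M.
Proof. by move=> sM; rewrite trmx_inv sM. Qed.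

Lemma qform_invmx M v : M \in unitmx -> M^T = M ->
  qform (invmx M) v = qform M (v *m invmx M).
Proof. by move=> uM sM; rewrite /qform bform_mulmx invmx_sym // mulVmx // mul1mx. Qed.

Lemma psd_coercive M a : 0 < a -> (forall v, a * sqnorm v <= qform M v) -> psd M.
Proof.
move=> a_gt0 M_ge v; apply: le_trans (M_ge v).
exact: mulr_ge0 (ltW a_gt0) (sqnorm_ge0 v).
Qed.

Lemma psd_invmx M a : 0 < a -> (forall v, a * sqnorm v <= qform M v) -> M^T = M ->
  psd (invmx M).
Proof.
move=> a_gt0 M_ge sM v; rewrite qform_invmx ?(unitmx_coercive a_gt0) //.
exact: psd_coercive a_gt0 M_ge _.
Qed.

Lemma sqnorm_mulmx_le N b : N^T = N -> psd N -> (forall v, qform N v <= b * sqnorm v) ->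
  0 <= b -> forall w, sqnorm (w *m N) <= b ^+ 2 * sqnorm w.
Proof.
move=> sN pN N_le b_ge0 w.
have wNE : bform N w (w *m N) = sqnorm (w *m N).
  by rewrite /bform /sqnorm trmx_mul sN !mulmxA.
have := psd_bform_CauchySchwarz w (w *m N) sN pN; rewrite wNE => CS.
move: (sqnorm (w *m N)) (sqnorm_ge0 (w *m N)) (N_le (w *m N)) CS => s s_ge0 NwN_le CS.
have [->|s_neq0] := eqVneq s 0; first by rewrite mulr_ge0 ?exprn_ge0 ?sqnorm_ge0.
have s_gt0 : 0 < s by rewrite lt0r s_neq0.
rewrite -(ler_pM2r s_gt0) -expr2; apply: le_trans CS _.
have -> : b ^+ 2 * sqnorm w * s = (b * sqnorm w) * (b * s) by ring.
exact: ler_pM (pN w) (pN _) (N_le w) NwN_le.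
Qed.

Lemma sqnorm_mulmx_ge M a : M^T = M -> 0 < a -> (forall v, a * sqnorm v <= qform M v) ->
  forall w, a ^+ 2 * sqnorm w <= sqnorm (w *m M).
Proof.
move=> sM a_gt0 M_ge w.
have wME : bform 1%:M w (w *m M) = qform M w.
  by rewrite /bform /qform mulmx1 trmx_mul sM mulmxA.
have := psd_bform_CauchySchwarz w (w *m M) (trmx1 _ _) (@psd1 _ _).
rewrite wME !qform1 => CS.
have [t0|t_neq0] := eqVneq (sqnorm w) 0; first by rewrite t0 mulr0 sqnorm_ge0.
have t_gt0 : 0 < sqnorm w by rewrite lt0r t_neq0 sqnorm_ge0.
rewrite -(ler_pM2r t_gt0) [X in _ <= X]mulrC; apply: le_trans CS.
have -> : a ^+ 2 * sqnorm w * sqnorm w = (a * sqnorm w) ^+ 2 by ring.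
have aw_ge0 : 0 <= a * sqnorm w := mulr_ge0 (ltW a_gt0) (sqnorm_ge0 w).
by rewrite lerXn2r ?nnegrE ?M_ge ?(le_trans aw_ge0 (M_ge w)).
Qed.

End PositiveDefinite.

Section Rayleigh.
Variables (R : realType) (k : nat).
Implicit Types (M N : 'M[R]_k) (v : 'rV[R]_k).

Definition entry_norm1 M : R := \sum_i \sum_j `|M i j|.

Lemma qform_abs_le M v : `|qform M v| <= entry_norm1 M * sqnorm v.
Proof.
rewrite qformE mulr_suml; apply: le_trans (ler_norm_sum _ _ _) _.
apply: ler_sum => i _; rewrite mulr_suml.
apply: le_trans (ler_norm_sum _ _ _) _; apply: ler_sum => j _.
rewrite mulrAC !normrM mulrC ler_wpM2l //.
have := sqr_coord_le_sqnorm v i; have := sqr_coord_le_sqnorm v j.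
rewrite -[v 0 i ^+ 2]real_normK ?num_real // -[v 0 j ^+ 2]real_normK ?num_real //.
have := sqr_ge0 (`|v 0 i| - `|v 0 j|); rewrite sqrrB; lra.
Qed.

Lemma psd_unitmx_coercive N : N^T = N -> psd N -> N \in unitmx ->
  exists2 e, 0 < e & forall v, e * sqnorm v <= qform N v.
Proof.
move=> sN pN uN; set c := entry_norm1 (invmx N).
have c_ge0 : 0 <= c by rewrite sumr_ge0 // => i _; rewrite sumr_ge0.
have c1_gt0 : 0 < c + 1 by lra.
exists (c + 1)^-1; first by rewrite invr_gt0.
move=> v; rewrite ler_pdivrMl //.
suff : sqnorm v <= c * qform N v by have := pN v; lra.
have [->|v_neq0] := eqVneq v 0; first by rewrite qform0v /sqnorm mul0mx mxE mulr0.
have vE : bform N v (v *m invmx N) = sqnorm v.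
  by rewrite /bform /sqnorm trmx_mul invmx_sym // !mulmxA mulmxK.
have := psd_bform_CauchySchwarz v (v *m invmx N) sN pN.
rewrite vE -qform_invmx // => CS.
rewrite -(ler_pM2r (sqnorm_gt0 v_neq0)) -expr2; apply: le_trans CS _.
rewrite [c * _]mulrC -mulrA ler_wpM2l //.
exact: le_trans (ler_norm _) (qform_abs_le _ _).
Qed.

(* The infimum of the Rayleigh quotient exists by completeness of R; it is an
   eigenvalue because otherwise M - mu would be coercive, contradicting maximality. *)
Lemma rayleigh_inf_eigenvalue M : (0 < k)%N -> M^T = M ->
  exists2 mu, eigenvalue M mu & forall v, mu * sqnorm v <= qform M v.
Proof.
move=> k_gt0 sM.
pose E : classical_sets.set R := fun t => forall v, t * sqnorm v <= qform M v.
have E_lb : E (- entry_norm1 M).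
  move=> v; rewrite mulNr lerNl; apply: le_trans (qform_abs_le M v).
  by rewrite -normrN ler_norm.
pose e0 : 'rV[R]_k := delta_mx 0 (Ordinal k_gt0).
have e0_gt0 : 0 < sqnorm e0.
  apply: sqnorm_gt0; apply/negP => /eqP/rowP/(_ (Ordinal k_gt0)).
  by rewrite !mxE eqxx /=; apply/eqP; exact: oner_neq0.
have E_sup : classical_sets.has_sup E.
  split; first by exists (- entry_norm1 M).
  by exists (qform M e0 / sqnorm e0) => t Et; rewrite ler_pdivlMr.
set mu := sup E.
have E_mu : E mu.
  move=> v; have [->|v_neq0] := eqVneq v 0.
    by rewrite qform0v /sqnorm mul0mx mxE mulr0.
  rewrite -ler_pdivlMr ?sqnorm_gt0 //; apply: ge_sup; first by exists (- entry_norm1 M).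
  by move=> t Et; rewrite ler_pdivlMr ?sqnorm_gt0.
exists mu => //.
pose N := M - mu *: 1%:M.
have qN v : qform N v = qform M v - mu * sqnorm v.
  by rewrite /qform bformB bformZ -qform1.
have sN : N^T = N by rewrite /N linearB /= sM linearZ /= trmx1.
have pN : psd N by move=> v; rewrite qN subr_ge0.
have [uN|] := boolP (N \in unitmx).
  have [e e_gt0 N_ge] := psd_unitmx_coercive sN pN uN.
  have : E (mu + e) by move=> v; have := N_ge v; rewrite qN mulrDl; lra.
  by move/(sup_upper_bound E_sup); rewrite -/mu; lra.
rewrite unitmxE unitfE negbK => /det0P [v v_neq0 vN0].
apply/eigenvalueP; exists v => //.
by move/eqP: vN0; rewrite /N mulmxBr subr_eq0 -scalemxAr mulmx1 => /eqP.
Qed.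

Lemma qform_ge_lambda_min M lmin : (0 < k)%N -> M^T = M ->
  (forall y, eigenvalue M y -> lmin <= y) -> forall v, lmin * sqnorm v <= qform M v.
Proof.
move=> k_gt0 sM lmin_le v.
have [mu /lmin_le lmin_le_mu M_ge] := rayleigh_inf_eigenvalue k_gt0 sM.
exact: le_trans (ler_wpM2r (sqnorm_ge0 v) lmin_le_mu) (M_ge v).
Qed.

Lemma qform_le_lambda_max M lmax : (0 < k)%N -> M^T = M ->
  (forall y, eigenvalue M y -> y <= lmax) -> forall v, qform M v <= lmax * sqnorm v.
Proof.
move=> k_gt0 sM le_lmax v.
have sNM : (- M)^T = - M by rewrite linearN /= sM.
have := @qform_ge_lambda_min _ (- lmax) k_gt0 sNM _ v.
rewrite /qform bformN mulNr lerN2; apply.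
move=> y /eigenvalueP [w wM w_neq0]; rewrite lerNl; apply: le_lmax.
by apply/eigenvalueP; exists w => //; rewrite scaleNr -wM mulmxN opprK.
Qed.

End Rayleigh.

Section ResolventTrace.
Variables (R : realType) (k : nat) (M D : 'M[R]_k) (a : R).
Hypotheses (sM : M^T = M) (sD : D^T = D) (pD : psd D) (a_gt0 : 0 < a).
Hypothesis M_ge : forall v, a * sqnorm v <= qform M v.

Local Notation K0 := (invmx M).
Local Notation K1 := (invmx (M + D)).

Let MD_ge v : a * sqnorm v <= qform (M + D) v.
Proof. by rewrite /qform bformD; have := M_ge v; have := pD v; rewrite /qform; lra. Qed.

Let uM : M \in unitmx := unitmx_coercive a_gt0 M_ge.
Let uMD : M + D \in unitmx := unitmx_coercive a_gt0 MD_ge.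
Let sMD : (M + D)^T = M + D. Proof. by rewrite linearD /= sM sD. Qed.
Let sK0 : K0^T = K0 := invmx_sym sM.
Let sK1 : K1^T = K1 := invmx_sym sMD.
Let pK0 : psd K0 := psd_invmx a_gt0 M_ge sM.
Let pK1 : psd K1 := psd_invmx a_gt0 MD_ge sMD.

Let psd_DKD K : psd K -> psd (D *m K *m D).
Proof. by move/(psd_conj D); rewrite sD. Qed.

Lemma resolvent_l : K0 - K1 = K0 *m D *m K1.
Proof.
rewrite -[X in _ = _ *m X *m _](addKr M D) mulmxDr mulmxN mulmxDl mulNmx.
by rewrite mulVmx // mul1mx mulmxK // addrC.
Qed.

Lemma resolvent_r : K0 - K1 = K1 *m D *m K0.
Proof.
rewrite -[X in _ = _ *m X *m _](addKr M D) mulmxDr mulmxN mulmxDl mulNmx.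
by rewrite mulmxK // mulVmx // mul1mx addrC.
Qed.

Lemma resolvent2_l : K0 - K1 = K0 *m D *m K0 - K0 *m (D *m K1 *m D) *m K0.
Proof.
have K1E : K1 = K0 - K1 *m D *m K0 by rewrite -resolvent_r subKr.
by rewrite resolvent_l [in LHS]K1E mulmxBr !mulmxA.
Qed.

Lemma resolvent2_r : K0 - K1 = K1 *m D *m K1 + K1 *m (D *m K0 *m D) *m K1.
Proof.
have K0E : K0 = K1 + K0 *m D *m K1 by rewrite -resolvent_l subrKC.
by rewrite resolvent_r [in LHS]K0E mulmxDr !mulmxA.
Qed.

Lemma mxtrace_invmx_addr_le : \tr K1 <= \tr K0.
Proof.
rewrite -subr_ge0 -mxtraceB resolvent2_r mxtraceD addr_ge0 //.
  by have := mxtrace_conj_ge0 K1 pD; rewrite sK1.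
by have := mxtrace_conj_ge0 K1 (psd_DKD pK0); rewrite sK1.
Qed.

Lemma mxtrace_invmx_decr_le : \tr K0 - \tr K1 <= \tr (K0 *m D *m K0).
Proof.
rewrite -mxtraceB resolvent2_l mxtraceB lerBlDr lerDl.
by have := mxtrace_conj_ge0 K0 (psd_DKD pK1); rewrite sK0.
Qed.

Lemma mxtrace_conj_gram_le m (G : 'M[R]_(m, k)) :
  \tr (K0 *m (G^T *m G) *m K0) <= \tr (G^T *m G) / a ^+ 2.
Proof.
have -> : K0 *m (G^T *m G) *m K0 = (G *m K0)^T *m (G *m K0).
  by rewrite trmx_mul sK0 !mulmxA.
rewrite !mxtrace_gram mulr_suml; apply: ler_sum => i _.
rewrite row_mul ler_pdivlMr ?exprn_gt0 // mulrC.
by have := sqnorm_mulmx_ge sM a_gt0 M_ge (row i G *m K0); rewrite -mulmxA mulVmx ?mulmx1.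
Qed.

Section UpperBound.
Variable b : R.
Hypotheses (a_le_b : a <= b) (MD_le : forall v, qform (M + D) v <= b * sqnorm v).

Let b_gt0 : 0 < b. Proof. exact: lt_le_trans a_le_b. Qed.

(* With z := v D K1, Cauchy-Schwarz for D gives (z (M+D) z^T)^2 <= (v D v^T) (z D z^T),
   and z D z^T = z (M+D) z^T - z M z^T <= (1 - a/b) z (M+D) z^T. *)
Lemma psd_DKD_le : psd ((1 - a / b) *: D - D *m K1 *m D).
Proof.
move=> v; set z := v *m D *m K1.
have DKD_z : qform (D *m K1 *m D) v = qform (M + D) z.
  by rewrite /z -qform_invmx // /qform bform_mulmx sD.
have bD_z : bform D v z = qform (M + D) z.
  by rewrite -DKD_z /z /qform /bform trmx_mul sK1 trmx_mul sD !mulmxA.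
have := psd_bform_CauchySchwarz v z sD pD; rewrite bD_z => CS.
have q_ge0 : 0 <= qform (M + D) z by rewrite -DKD_z; exact: psd_DKD pK1 v.
have Dz_le : qform D z <= (1 - a / b) * qform (M + D) z.
  have qD_z : qform D z = qform (M + D) z - qform M z by rewrite /qform bformD; ring.
  have : a / b * qform (M + D) z <= a * sqnorm z.
    by rewrite mulrAC ler_pdivrMr // -mulrA [sqnorm z * b]mulrC ler_pM2l.
  by have := M_ge z; rewrite qD_z; lra.
rewrite /qform bformB bformZ -/(qform D v) -/(qform (D *m K1 *m D) v) DKD_z subr_ge0.
have [->|q_neq0] := eqVneq (qform (M + D) z) 0.
  by rewrite mulr_ge0 ?pD // subr_ge0 ler_pdivrMr // mul1r.
have q_gt0 : 0 < qform (M + D) z by rewrite lt0r q_neq0.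
rewrite -(ler_pM2r q_gt0) -expr2; apply: le_trans CS _.
rewrite [(1 - a / b) * _]mulrC -mulrA; exact: (ler_wpM2l (pD v)).
Qed.

Lemma mxtrace_invmx_decr_ge : a / b * \tr (K0 *m D *m K0) <= \tr K0 - \tr K1.
Proof.
rewrite -mxtraceB resolvent2_l mxtraceB.
have := mxtrace_conj_le K0 psd_DKD_le.
by rewrite sK0 -scalemxAr -scalemxAl mxtraceZ mulrBl mul1r; lra.
Qed.

Lemma mxtrace_invmx_decr_ge_gram m (G : 'M[R]_(m, k)) : D = G^T *m G ->
  \tr (G^T *m G) / b ^+ 2 <= \tr K0 - \tr K1.
Proof.
move=> DG; rewrite -mxtraceB resolvent2_r mxtraceD.
have := mxtrace_conj_ge0 K1 (psd_DKD pK0); rewrite sK1.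
suff : \tr (G^T *m G) / b ^+ 2 <= \tr (K1 *m D *m K1) by lra.
have -> : K1 *m D *m K1 = (G *m K1)^T *m (G *m K1) by rewrite trmx_mul sK1 DG !mulmxA.
rewrite !mxtrace_gram mulr_suml; apply: ler_sum => i _.
rewrite row_mul ler_pdivrMr ?exprn_gt0 // mulrC.
have := sqnorm_mulmx_le sMD (psd_coercive a_gt0 MD_ge) MD_le (ltW b_gt0) (row i G *m K1).
by rewrite -mulmxA mulVmx ?mulmx1.
Qed.

End UpperBound.
End ResolventTrace.

Section BlockDiagonal.
Variables (R : realType) (l n : nat).
Implicit Types (v : 'rV[R]_(l * n)) (X W : 'M[R]_n).

Definition tens_block v (i : 'I_l) : 'rV[R]_n := \row_j v 0 (mxtens_index (i, j)).

Lemma sum_mxtens_index (F : 'I_(l * n) -> R) :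
  \sum_a F a = \sum_i \sum_j F (mxtens_index (i, j)).
Proof.
rewrite (reindex (@mxtens_index l n)) /=; last first.
  by apply: onW_bij; exists (@mxtens_unindex l n); [exact: mxtens_indexK | exact: mxtens_unindexK].
by rewrite pair_big /=; apply: eq_bigr => -[i j].
Qed.

Lemma qform_diag_tens (P : pred 'I_l) X v :
  qform ((\matrix_(i, j) ((i == j) && P i)%:R : 'M[R]_l) *t X) v =
  \sum_i (P i)%:R * qform X (tens_block v i).
Proof.
rewrite qformE sum_mxtens_index; apply: eq_bigr => i _.
rewrite qformE mulr_sumr; apply: eq_bigr => j _.
rewrite sum_mxtens_index (bigD1 i) //= [X in _ + X]big1 ?addr0; last first.
  move=> i' i'_neq_i; rewrite big1 // => j' _.
  by rewrite tensmxE mxE eq_sym (negbTE i'_neq_i) mul0r mulr0 mul0r.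
rewrite mulr_sumr; apply: eq_bigr => j' _.
rewrite tensmxE !mxE eqxx /=; ring.
Qed.

Lemma tens_block_neq0 v : v != 0 -> exists i, tens_block v i != 0.
Proof.
move=> v_neq0; have [c vc_neq0] : exists c, v 0 c != 0.
  apply/existsP; apply: contraR v_neq0 => /existsPn v0; apply/eqP/rowP => c.
  by rewrite mxE; apply/eqP; rewrite -[_ == _]negbK v0.
move: vc_neq0; rewrite -[c](@mxtens_unindexK l n).
case: (mxtens_unindex c) => i j vij_neq0; exists i.
by apply: contraNneq vij_neq0 => /rowP/(_ j); rewrite !mxE => ->.
Qed.

Lemma Zmx_sym (X0 W : 'M[R]_n) : X0^T = X0 -> W^T = W -> (Zmx l X0 W)^T = Zmx l X0 W.
Proof.
move=> sX0 sW; rewrite /Zmx linearD /= !trmx_tens sX0 sW.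
by congr (_ *t _ + _ *t _); apply/matrixP => i j; rewrite !mxE eq_sym; case: eqP => // ->.
Qed.

Lemma Zmx_pd (X0 W : 'M[R]_n) : spd X0 -> spd W -> forall v, v != 0 -> 0 < qform (Zmx l X0 W) v.
Proof.
move=> [_ X0_pd] [_ W_pd] v v_neq0.
have qform_pd_ge0 (Y : 'M[R]_n) u : (forall u, u != 0 -> 0 < qform Y u) -> 0 <= qform Y u.
  by move=> Y_pd; have [->|/Y_pd/ltW //] := eqVneq u 0; rewrite qform0v.
rewrite /Zmx /qform bformD -!/(qform _ v) !qform_diag_tens -big_split /=.
have [i vi_neq0] := tens_block_neq0 v_neq0.
rewrite (bigD1 i) //= ltr_pwDl //.
  by case: (_ == 0)%N; rewrite /= ?mul1r ?mul0r ?add0r ?addr0; [exact: X0_pd | exact: W_pd].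
by rewrite sumr_ge0 // => i' _; rewrite addr_ge0 // mulr_ge0 ?qform_pd_ge0.
Qed.

End BlockDiagonal.

Section SensorSelection.
Variables (R : realType) (n p l : nat) (A : 'M[R]_n) (C : 'M[R]_(p, n)).
Variable sig : 'I_p -> R.
Implicit Types (S T Om : {set 'I_p}).

Local Notation U := (Umx l A C sig).

Definition sensor_gain (i : 'I_p) : 'M[R]_(l * p, l * n) :=
  (sig i)^-1 *: ((1%:M *t delta_mx i i) *m (1%:M *t C) *m Phi l A).

Lemma Umx_gram S : U S = \sum_(i in S) (sensor_gain i)^T *m sensor_gain i.
Proof.
apply: eq_bigr => i _; rewrite /sensor_gain !linearZ /= -scalemxAl scalerA.
congr (_ *: _); first by rewrite expr2 invfM.
rewrite !trmx_mul !trmx_tens !trmx1 trmx_delta !mulmxA; congr (_ *m _ *m _).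
by rewrite -[RHS]mulmxA tensmx_mul mul1mx mul_delta_mx.
Qed.

Lemma Umx_set1 i : U [set i] = (sensor_gain i)^T *m sensor_gain i.
Proof. by rewrite Umx_gram big_set1. Qed.

Lemma Umx_sum1 S : U S = \sum_(i in S) U [set i].
Proof. by rewrite Umx_gram; apply: eq_bigr => i _; rewrite Umx_set1. Qed.

Lemma Umx_sym S : (U S)^T = U S.
Proof. by rewrite Umx_gram linear_sum; apply: eq_bigr => i _ /=; rewrite trmx_mul trmxK. Qed.

Lemma Umx_psd S : psd (U S).
Proof. by rewrite Umx_gram; apply: psd_sum => i _; apply: psd_gram. Qed.

Lemma Umx_setD S T : S \subset T -> U T = U S + U (T :\: S).
Proof. by move=> sST; rewrite /Umx (big_setID S) /= (setIidPr sST). Qed.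

Section Bounds.
Variables (X0 W : 'M[R]_n) (a b : R).
Hypotheses (X0_spd : spd X0) (W_spd : spd W) (n_gt0 : (0 < n)%N) (l_gt0 : (0 < l)%N).
Hypothesis a_min : is_lambda_min (Lmx l X0 W) a.
Hypothesis b_max : is_lambda_max (Lmx l X0 W + U setT) b.

Local Notation L := (Lmx l X0 W).
Local Notation J := (Jcost l A C X0 W sig).
Local Notation f := (fobj l A C X0 W sig).

Let ln_gt0 : (0 < l * n)%N. Proof. by rewrite muln_gt0 n_gt0 l_gt0. Qed.
Let sZ := Zmx_sym l X0_spd.1 W_spd.1.
Let Z_pd := @Zmx_pd R l n X0 W X0_spd W_spd.
Let uZ : Zmx l X0 W \in unitmx.
Proof.
rewrite unitmxE unitfE; apply/negP => /det0P [v v_neq0 vZ0].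
by have := Z_pd v_neq0; rewrite /qform /bform vZ0 mul0mx mxE ltxx.
Qed.

Lemma Lmx_sym : L^T = L.
Proof. exact: invmx_sym. Qed.

Lemma Lmx_pd v : v != 0 -> 0 < qform L v.
Proof.
move=> v_neq0; rewrite qform_invmx //; apply: Z_pd.
by apply: contraNneq v_neq0 => /(congr1 (mulmx^~ (Zmx l X0 W))); rewrite mulmxKV // mul0mx => ->.
Qed.

Lemma LU_sym S : (L + U S)^T = L + U S.
Proof. by rewrite linearD /= Lmx_sym Umx_sym. Qed.

Lemma LU_setD S T : S \subset T -> L + U T = (L + U S) + U (T :\: S).
Proof. by move=> sST; rewrite (Umx_setD sST) addrA. Qed.

Lemma lambda_min_gt0 : 0 < a.
Proof.
have [v vL v_neq0] := eigenvalueP a_min.1.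
have := Lmx_pd v_neq0; rewrite /qform /bform vL -scalemxAl mxE -/(sqnorm v).
by rewrite pmulr_lgt0 ?sqnorm_gt0.
Qed.

Lemma qform_LU_ge S v : a * sqnorm v <= qform (L + U S) v.
Proof.
rewrite /qform bformD -!/(qform _ v).
by have := qform_ge_lambda_min ln_gt0 Lmx_sym a_min.2 v; have := Umx_psd S v; lra.
Qed.

Lemma qform_LU_le S v : qform (L + U S) v <= b * sqnorm v.
Proof.
apply: le_trans (qform_le_lambda_max ln_gt0 (LU_sym setT) b_max.2 v).
rewrite (LU_setD (subsetT S)) /qform [in X in _ <= X]bformD lerDl; exact: Umx_psd.
Qed.

Lemma lambda_min_le_max : a <= b.
Proof.
have [v _ v_neq0] := eigenvalueP a_min.1.
by rewrite -(ler_pM2r (sqnorm_gt0 v_neq0)) (le_trans (qform_LU_ge setT v)) ?qform_LU_le.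
Qed.

Lemma lambda_max_gt0 : 0 < b.
Proof. exact: lt_le_trans lambda_min_gt0 lambda_min_le_max. Qed.

Local Notation K S := (invmx (L + U S)).

Lemma Jcost_le S T : S \subset T -> J T <= J S.
Proof.
move=> sST; rewrite /Jcost (LU_setD sST).
exact: mxtrace_invmx_addr_le (LU_sym S) (Umx_sym _) (Umx_psd _) lambda_min_gt0 (qform_LU_ge S).
Qed.

Lemma Jcost_decr_le S T : S \subset T -> J S - J T <= \tr (K S *m U (T :\: S) *m K S).
Proof.
move=> sST; rewrite /Jcost (LU_setD sST).
exact: mxtrace_invmx_decr_le (LU_sym S) (Umx_sym _) (Umx_psd _) lambda_min_gt0 (qform_LU_ge S).
Qed.

Lemma Jcost_decr_ge S T : S \subset T ->
  a / b * \tr (K S *m U (T :\: S) *m K S) <= J S - J T.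
Proof.
move=> sST; rewrite /Jcost (LU_setD sST).
apply: (mxtrace_invmx_decr_ge (LU_sym S) (Umx_sym _) (Umx_psd _) lambda_min_gt0
  (qform_LU_ge S) lambda_min_le_max) => v.
by rewrite -LU_setD //; apply: qform_LU_le.
Qed.

Lemma setU1_setD S j : j \notin S -> (S :|: [set j]) :\: S = [set j].
Proof. by move=> jS; rewrite setDUl setDv set0U; apply/setDidPl; rewrite disjoints1. Qed.

Lemma Jcost_add1_ge S j : j \notin S ->
  \tr ((sensor_gain j)^T *m sensor_gain j) / b ^+ 2 <= J S - J (S :|: [set j]).
Proof.
move=> jS; have sSj := subsetUl S [set j].
rewrite /Jcost (LU_setD sSj) setU1_setD //.
apply: (mxtrace_invmx_decr_ge_gram (LU_sym S) (Umx_sym _) (Umx_psd _) lambda_min_gt0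
  (qform_LU_ge S) lambda_min_le_max) (Umx_set1 j) => v.
by rewrite -(setU1_setD jS) -LU_setD //; apply: qform_LU_le.
Qed.

Lemma Jcost_add1_le S j : j \notin S ->
  J S - J (S :|: [set j]) <= \tr ((sensor_gain j)^T *m sensor_gain j) / a ^+ 2.
Proof.
move=> jS; apply: le_trans (Jcost_decr_le (subsetUl S [set j])) _.
rewrite setU1_setD // Umx_set1.
exact: (mxtrace_conj_gram_le (LU_sym S) lambda_min_gt0 (qform_LU_ge S) (sensor_gain j)).
Qed.

Lemma rho_fobj Om S : rho f Om S = J S - J (S :|: Om).
Proof. by rewrite /rho /fobj; ring. Qed.

Lemma fobj_le S T : S \subset T -> f S <= f T.
Proof. by move=> sST; rewrite /fobj lerD2r lerN2; apply: Jcost_le. Qed.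

Lemma fobj_submod_ratio : submod_ratio_ineq f (a / b).
Proof.
move=> Om S; rewrite rho_fobj.
have r_ge0 : 0 <= a / b by rewrite divr_ge0 ?ltW ?lambda_min_gt0 ?lambda_max_gt0.
have := Jcost_decr_le (subsetUl S Om).
rewrite setDUl setDv set0U [U (Om :\: S)]Umx_sum1 mulmx_sumr mulmx_suml linear_sum => decr_le.
apply: le_trans (ler_wpM2l r_ge0 decr_le) _; rewrite mulr_sumr.
apply: ler_sum => w; rewrite in_setD => /andP [wS _]; rewrite rho_fobj.
by have := Jcost_decr_ge (subsetUl S [set w]); rewrite setU1_setD.
Qed.

Lemma fobj_curvature : curvature_ineq f (1 - a ^+ 2 / b ^+ 2).
Proof.
move=> Om S j; rewrite in_setD => /andP [jOm jS]; rewrite !rho_fobj subKr.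
have jSOm : j \notin (S :\ j) :|: Om by rewrite in_setU in_setD1 eqxx (negbTE jOm).
have jSj : j \notin S :\ j by rewrite in_setD1 eqxx.
apply: le_trans (Jcost_add1_ge jSOm).
have a_neq0 := gt_eqF lambda_min_gt0; have b_neq0 := gt_eqF lambda_max_gt0.
set g := \tr (_ *m _).
have -> : g / b ^+ 2 = a ^+ 2 / b ^+ 2 * (g / a ^+ 2) by field; rewrite a_neq0 b_neq0.
by rewrite ler_wpM2l ?divr_ge0 ?sqr_ge0 ?Jcost_add1_le.
Qed.

End Bounds.
End SensorSelection.

Theorem theorem1 (R : realType) (n p l : nat) (A : 'M[R]_n) (C : 'M[R]_(p, n))
  (X0 W : 'M[R]_n) (sig : 'I_p -> R) (lmin lmax : R) :
  (0 < n)%N -> (0 < p)%N -> (0 < l)%N ->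
  spd X0 -> spd W -> (forall i, 0 < sig i) ->
  is_lambda_min (Lmx l X0 W) lmin ->
  is_lambda_max (Lmx l X0 W + Umx l A C sig [set: 'I_p]) lmax ->
  let f := fobj l A C X0 W sig in
  let gamma_lb := lmin / lmax in
  let alpha_ub := 1 - lmin ^+ 2 / lmax ^+ 2 in
  (forall S1 S2 : {set 'I_p}, S1 \subset S2 -> f S1 <= f S2) /\
  (forall g, is_submod_ratio f g -> gamma_lb <= g) /\ 0 < gamma_lb /\
  (forall a, is_curvature f a -> a <= alpha_ub) /\ alpha_ub < 1.
Proof.
move=> n_gt0 _ l_gt0 X0_spd W_spd _ a_min b_max f gamma_lb alpha_ub.
have a_gt0 := lambda_min_gt0 X0_spd W_spd a_min.
have b_gt0 := lambda_max_gt0 X0_spd W_spd n_gt0 l_gt0 a_min b_max.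
split; first exact: (fobj_le A C sig X0_spd W_spd n_gt0 l_gt0 a_min).
split; first by move=> g [_]; apply; exact: (fobj_submod_ratio X0_spd W_spd n_gt0 l_gt0 a_min b_max).
split; first exact: divr_gt0.
split; first by move=> al [_]; apply; exact: (fobj_curvature X0_spd W_spd n_gt0 l_gt0 a_min b_max).
by rewrite /alpha_ub gtrDl oppr_lt0 divr_gt0 ?exprn_gt0.
Qed.
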